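(* Let $X$ be a nonempty set and $d$ a triangular symmetric on $X$ such that $(X,d)$ is 0-complete. Let $T:X\to X$, $G\in\{M_1,M_2\}$, and suppose $d(Tx,Ty)\le\varphi(G(x,y))$ for all $x,y\in X$, for some nearly right admissible asymptotic normal function $\varphi:[0,\infty)\to[0,\infty)$. Then $T$ is a global Picard operator (modulo $d$).
   Context: A symmetric on $X$ is a map $d:X\times X\to[0,\infty)$ with $d(x,y)=d(y,x)$; it is triangular if $d(x,z)\le d(x,y)+d(y,z)$ for all $x,y,z$. A sequence $(x_n)$ $0d$-converges to $x$ if $d(x_n,x)\to0$; it is $0d$-convergent if such $x$ exists; it is $0d$-Cauchy if for every $\varepsilon>0$ there is $j$ with $d(x_m,x_n)<\varepsilon$ whenever $j\le m<n$. $(X,d)$ is 0-complete if every $0d$-Cauchy sequence is $0d$-convergent. A nonempty $Y\subseteq X$ is $d$-singleton if $d(y_1,y_2)=0$ for all $y_1,y_2\in Y$. $\mathrm{Fix}(T;d)=\{z: d(z,Tz)=0\}$. $T$ is a global Picard operator (modulo $d$) if for every $x\in X$ the sequence $(T^nx)$ is $0d$-convergent and every point to which it $0d$-converges lies in $\mathrm{Fix}(T;d)$, and moreover $\mathrm{Fix}(T;d)$ is $d$-singleton. Notation: $M_1(x,y)=d(x,y)$, $H(x,y)=\max\{d(x,Tx),d(y,Ty)\}$, $M_2=\max\{M_1,H\}$. $\varphi$ is normal if $\varphi(0)=0$ and $\varphi(t)<t$ for $t>0$; asymptotic normal if normal and every sequence $(r_n)$ in $[0,\infty)$ with $r_{n+1}\le\varphi(r_n)$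 for all $n$ tends to $0$; nearly right admissible if normal and there is a countable $Q\subseteq(0,\infty)$ with $\max\{\limsup_{t\to s+}\varphi(t),\varphi(s)\}<s$ for all $s\in(0,\infty)\setminus Q$. *)

From Stdlib Require Import Reals.
Open Scope R_scope.

Section Defs.
Context {X : Type}.

Definition symmetric_fn (d : X -> X -> R) : Prop :=
  (forall x y, 0 <= d x y) /\ (forall x y, d x y = d y x).

Definition triangular (d : X -> X -> R) : Prop :=
  forall x y z, d x z <= d x y + d y z.

Definition zd_converges (d : X -> X -> R) (u : nat -> X) (x : X) : Prop :=
  forall eps, eps > 0 -> exists N, forall n, (n >= N)%nat -> d (u n) x < eps.

Definition zd_convergent (d : X -> X -> R) (u : nat -> X) : Prop :=
  exists x, zd_converges d u x.

Definition zd_Cauchy (d : X -> X -> R) (u : nat -> X) : Prop :=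
  forall eps, eps > 0 -> exists j, forall m n, (j <= m)%nat -> (m < n)%nat ->
    d (u m) (u n) < eps.

Definition zero_complete (d : X -> X -> R) : Prop :=
  forall u, zd_Cauchy d u -> zd_convergent d u.

Definition Fix (T : X -> X) (d : X -> X -> R) (z : X) : Prop := d z (T z) = 0.

Definition d_singleton (d : X -> X -> R) (Y : X -> Prop) : Prop :=
  (exists y, Y y) /\ (forall y1 y2, Y y1 -> Y y2 -> d y1 y2 = 0).

Definition global_Picard (T : X -> X) (d : X -> X -> R) : Prop :=
  (forall x, zd_convergent d (fun n => Nat.iter n T x) /\
     (forall z, zd_converges d (fun n => Nat.iter n T x) z -> Fix T d z)) /\
  d_singleton d (Fix T d).

Definition M1 (d : X -> X -> R) (x y : X) : R := d x y.
Definition H (T : X -> X) (d : X -> X -> R) (x y : X) : R :=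
  Rmax (d x (T x)) (d y (T y)).
Definition M2 (T : X -> X) (d : X -> X -> R) (x y : X) : R :=
  Rmax (M1 d x y) (H T d x y).
End Defs.

(* phi : [0,oo) -> [0,oo), represented as a total function R -> R whose
   values on [0,oo) are nonnegative; only its values on [0,oo) matter. *)
Definition maps_nonneg (phi : R -> R) : Prop :=
  forall t, 0 <= t -> 0 <= phi t.

Definition normal (phi : R -> R) : Prop :=
  phi 0 = 0 /\ (forall t, t > 0 -> phi t < t).

Definition asymptotic_normal (phi : R -> R) : Prop :=
  normal phi /\
  forall r : nat -> R, (forall n, 0 <= r n) -> (forall n, r (S n) <= phi (r n)) ->
    Un_cv r 0.

(* limsup_{t -> s+} phi t < s, unfolded: some c < s bounds phi on a right
   neighbourhood (s, s+delta). *)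
Definition limsup_right_lt (phi : R -> R) (s : R) : Prop :=
  exists c delta, c < s /\ delta > 0 /\
    forall t, s < t < s + delta -> phi t <= c.

(* countable Q <= (0,oo) given as (a superset of it in) the range of q;
   condition required for s > 0 outside Q. *)
Definition nearly_right_admissible (phi : R -> R) : Prop :=
  normal phi /\
  exists Q : R -> Prop, (forall s, Q s -> s > 0) /\
    (exists q : nat -> R, forall s, Q s -> exists n, q n = s) /\
    forall s, s > 0 -> ~ Q s -> limsup_right_lt phi s /\ phi s < s.

(* The consecutive distances r_n = d(T^n x, T^(n+1) x) satisfy r_(n+1) <= phi r_n, so they
   tend to 0 because phi is asymptotic normal.  Near right admissibility provides, below any
   given bound, a radius eps outside the countable exceptional set together with a window
   [0, eps + delta) on which phi < eps; once the steps are shorter than delta, an induction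
   along the orbit keeps d(T^m x, T^n x) < eps + delta, so the orbit is 0d-Cauchy.  By
   0-completeness it converges, every limit is a fixed point modulo d, and the contraction
   together with phi t < t forces any two fixed points to be at distance 0. *)

From Stdlib Require Import Reals Lra Lia.
Open Scope R_scope.

(* Cantor's nested intervals: step n keeps an outer closed third that misses q n. *)
Fixpoint trisect (q : nat -> R) (a b : R) (n : nat) : R * R :=
  match n with
  | O => (a, b)
  | S k =>
      let (l, h) := trisect q a b k in
      if Rlt_dec (q k) ((l + h) / 2) then (h - (h - l) / 3, h) else (l, l + (h - l) / 3)
  end.

Section Trisection.
Variables (q : nat -> R) (a b : R).
Hypothesis a_lt_b : a < b.

Lemma trisect_lt n : fst (trisect q a b n) < snd (trisect q a b n).
Proof.
induction n as [|n IH]; simpl; [lra|].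
destruct (trisect q a b n) as [l h]; simpl in IH.
destruct Rlt_dec; simpl; lra.
Qed.

Lemma trisect_succ n :
  fst (trisect q a b n) <= fst (trisect q a b (S n)) /\
  snd (trisect q a b (S n)) <= snd (trisect q a b n) /\
  (q n < fst (trisect q a b (S n)) \/ snd (trisect q a b (S n)) < q n).
Proof.
pose proof (trisect_lt n) as Hlt. simpl.
destruct (trisect q a b n) as [l h]; simpl in *.
destruct Rlt_dec; simpl; lra.
Qed.

Lemma trisect_nested m k :
  fst (trisect q a b m) <= fst (trisect q a b (k + m)) /\
  snd (trisect q a b (k + m)) <= snd (trisect q a b m).
Proof.
induction k as [|k IH]; simpl plus; [lra|].
pose proof (trisect_succ (k + m)). lra.
Qed.

Lemma trisect_fst_le_snd m n : fst (trisect q a b m) <= snd (trisect q a b n).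
Proof.
destruct (Nat.le_ge_cases m n) as [Hmn | Hnm].
- replace n with ((n - m) + m)%nat by lia.
  pose proof (trisect_nested m (n - m)). pose proof (trisect_lt ((n - m) + m)). lra.
- replace m with ((m - n) + n)%nat by lia.
  pose proof (trisect_nested n (m - n)). pose proof (trisect_lt ((m - n) + n)). lra.
Qed.

End Trisection.

Lemma exists_point_avoiding_seq (q : nat -> R) (a b : R) :
  a < b -> exists s, a < s < b /\ forall n, q n <> s.
Proof.
intros Hab.
set (l := a + (b - a) / 3). set (h := b - (b - a) / 3).
assert (Hlh : l < h) by (unfold l, h; lra).
set (E := fun x => exists n, x = fst (trisect q l h n)).
destruct (completeness E) as [s [Hub Hlub]].
- exists h. intros x [n ->]. exact (trisect_fst_le_snd q l h Hlh n 0).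
- exists l. exists 0%nat. reflexivity.
- assert (Hin : forall n, fst (trisect q l h n) <= s <= snd (trisect q l h n)).
  { intros n. split.
    - apply Hub. exists n. reflexivity.
    - apply Hlub. intros x [m ->]. apply trisect_fst_le_snd; exact Hlh. }
  exists s. split.
  + pose proof (Hin 0%nat) as H0. simpl in H0. unfold l, h in H0. lra.
  + intros n Hqn. pose proof (Hin (S n)). pose proof (trisect_succ q l h Hlh n). lra.
Qed.

Lemma normal_le (phi : R -> R) t : normal phi -> 0 <= t -> phi t <= t.
Proof.
intros [Hphi0 Hphi_lt] Ht.
destruct (Req_dec t 0) as [-> | Ht0]; [lra|].
pose proof (Hphi_lt t). lra.
Qed.

Lemma normal_le_phi_eq0 (phi : R -> R) t : normal phi -> 0 <= t -> t <= phi t -> t = 0.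
Proof.
intros [_ Hphi_lt] Ht Htphi.
destruct (Req_dec t 0) as [| Ht0]; [assumption|].
pose proof (Hphi_lt t). lra.
Qed.

(* The radius eps is chosen off the countable exceptional set, where the right limsup of
   phi is below eps; below eps itself phi t < t < eps. *)
Lemma nearly_right_admissible_window (phi : R -> R) eps0 :
  nearly_right_admissible phi -> eps0 > 0 ->
  exists eps delta, 0 < eps < eps0 /\ delta > 0 /\
    forall t, 0 <= t < eps + delta -> phi t < eps.
Proof.
intros [[Hphi0 Hphi_lt] [Q [_ [[q Hq] HQ]]]] Heps0.
destruct (exists_point_avoiding_seq q 0 eps0 Heps0) as [eps [Heps Hq_eps]].
assert (HnQ : ~ Q eps).
{ intros HQe. destruct (Hq eps HQe) as [n Hn]. exact (Hq_eps n Hn). }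
destruct (HQ eps ltac:(lra) HnQ) as [[c [delta [Hc [Hdelta Hphi_c]]]] Hphi_eps].
exists eps, delta. split; [lra|]. split; [lra|].
intros t Ht.
destruct (Rlt_le_dec t eps) as [Hlt | Hge].
- destruct (Req_dec t 0) as [-> | Ht0]; [lra|]. pose proof (Hphi_lt t). lra.
- destruct (Req_dec t eps) as [-> | Hne]; [lra|]. pose proof (Hphi_c t). lra.
Qed.

Lemma Un_cv0_eventually_lt (r : nat -> R) gamma :
  Un_cv r 0 -> gamma > 0 -> exists N, forall n, (n >= N)%nat -> r n < gamma.
Proof.
intros Hr Hgamma. destruct (Hr gamma Hgamma) as [N HN]. exists N. intros n Hn.
specialize (HN n Hn). unfold Rdist in HN. pose proof (Rle_abs (r n - 0)). lra.
Qed.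

Section Contraction.
Variables (X : Type) (d : X -> X -> R) (T : X -> X) (useM2 : bool) (phi : R -> R).
Hypothesis d_ge0 : forall x y, 0 <= d x y.
Hypothesis d_sym : forall x y, d x y = d y x.
Hypothesis d_tri : triangular d.
Hypothesis phi_normal : normal phi.

Let G x y := if useM2 then M2 T d x y else M1 d x y.
Hypothesis contraction : forall x y, d (T x) (T y) <= phi (G x y).

Lemma G_cases x y : G x y = d x y \/ G x y = M2 T d x y.
Proof. unfold G, M1. destruct useM2; auto. Qed.

Lemma G_bounds x y : 0 <= G x y <= M2 T d x y.
Proof.
pose proof (d_ge0 x y) as Hxy.
pose proof (Rmax_l (d x y) (Rmax (d x (T x)) (d y (T y)))) as Hmax.
destruct (G_cases x y) as [-> | ->]; unfold M2, M1, H in *; lra.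
Qed.

Lemma dist_step_contracts x : d (T x) (T (T x)) <= phi (d x (T x)).
Proof.
pose proof (contraction x (T x)) as Hc.
destruct (G_cases x (T x)) as [HG | HG]; rewrite HG in Hc; [exact Hc|].
unfold M2, M1, H in Hc.
destruct (Rle_dec (d (T x) (T (T x))) (d x (T x))) as [Hle | Hgt].
- rewrite (Rmax_left (d x (T x)) (d (T x) (T (T x)))), Rmax_left in Hc by lra. exact Hc.
- rewrite (Rmax_right (d x (T x)) (d (T x) (T (T x)))), Rmax_right in Hc by lra.
  pose proof (normal_le_phi_eq0 phi _ phi_normal (d_ge0 _ _) Hc). pose proof (d_ge0 x (T x)).
  lra.
Qed.

Lemma orbit_steps_cv0 x :
  asymptotic_normal phi ->
  Un_cv (fun n => d (Nat.iter n T x) (Nat.iter (S n) T x)) 0.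
Proof.
intros [_ Hasym]. apply Hasym; [intros n; apply d_ge0|].
intros n. exact (dist_step_contracts (Nat.iter n T x)).
Qed.

Section Window.
Variables (x : X) (N : nat) (eps delta gamma : R).
Hypothesis eps_pos : 0 < eps.
Hypothesis gamma_le_delta : gamma <= delta.
Hypothesis phi_window : forall t, 0 <= t < eps + delta -> phi t < eps.
Hypothesis steps_small :
  forall n, (n >= N)%nat -> d (Nat.iter n T x) (Nat.iter (S n) T x) < gamma.

(* d(x_m, x_(n+1)) <= d(x_m, x_(m+1)) + d(T x_m, T x_n) < gamma + phi (G x_m x_n), and
   G x_m x_n < eps + gamma lies in the window by induction. *)
Lemma orbit_dist_lt_window m n :
  (N <= m)%nat -> (m < n)%nat -> d (Nat.iter m T x) (Nat.iter n T x) < eps + gamma.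
Proof.
intros Hm. induction n as [|n IH]; intros Hmn; [lia|].
pose proof (steps_small m Hm) as Hstep_m.
destruct (Nat.eq_dec m n) as [<- | Hne]; [lra|].
assert (IHn : d (Nat.iter m T x) (Nat.iter n T x) < eps + gamma) by (apply IH; lia).
pose proof (steps_small n ltac:(lia)) as Hstep_n.
pose proof (G_bounds (Nat.iter m T x) (Nat.iter n T x)) as [HG0 HGM2].
assert (HG : G (Nat.iter m T x) (Nat.iter n T x) < eps + delta).
{ unfold M2, M1, H in HGM2. simpl in Hstep_m, Hstep_n.
  assert (Rmax (d (Nat.iter m T x) (Nat.iter n T x))
            (Rmax (d (Nat.iter m T x) (T (Nat.iter m T x)))
                  (d (Nat.iter n T x) (T (Nat.iter n T x)))) < eps + gamma).
  { apply Rmax_lub_lt; [lra|]. apply Rmax_lub_lt; lra. }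
  lra. }
pose proof (phi_window _ (conj HG0 HG)) as Hphi.
pose proof (contraction (Nat.iter m T x) (Nat.iter n T x)) as Hc.
pose proof (d_tri (Nat.iter m T x) (Nat.iter (S m) T x) (Nat.iter (S n) T x)) as Htri.
simpl in *. lra.
Qed.

End Window.

Lemma orbit_Cauchy x :
  nearly_right_admissible phi -> asymptotic_normal phi ->
  zd_Cauchy d (fun n => Nat.iter n T x).
Proof.
intros Hnra Han eps0 Heps0.
destruct (nearly_right_admissible_window phi (eps0 / 2) Hnra ltac:(lra))
  as [eps [delta [Heps [Hdelta Hwindow]]]].
set (gamma := Rmin delta eps).
assert (Hgamma : 0 < gamma) by (apply Rmin_pos; lra).
assert (Hgamma_delta : gamma <= delta) by apply Rmin_l.
assert (Hgamma_eps : gamma <= eps) by apply Rmin_r.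
destruct (Un_cv0_eventually_lt _ gamma (orbit_steps_cv0 x Han) Hgamma) as [N HN].
exists N. intros m n Hm Hmn.
pose proof (orbit_dist_lt_window x N eps delta gamma ltac:(lra) Hgamma_delta
  Hwindow HN m n Hm Hmn).
lra.
Qed.

(* With eta small, D = d(z, Tz) <= d(z, x_(n+1)) + d(T x_n, T z) < eta + max(eta, phi D),
   since G x_n z is either d(x_n, z) < eta or, once the orbit steps are below D, D itself. *)
Lemma orbit_limit_Fix x z :
  asymptotic_normal phi ->
  zd_converges d (fun n => Nat.iter n T x) z -> Fix T d z.
Proof.
intros Han Hz. unfold Fix. set (D := d z (T z)).
destruct (Req_dec D 0) as [| HD]; [assumption|exfalso].
assert (HD_pos : 0 < D) by (pose proof (d_ge0 z (T z)); unfold D in *; lra).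
pose proof (proj2 phi_normal D HD_pos) as HphiD.
set (eta := Rmin (D / 2) ((D - phi D) / 2)).
assert (Heta : 0 < eta) by (apply Rmin_pos; lra).
assert (Heta_D : eta <= D / 2) by apply Rmin_l.
assert (Heta_phiD : eta <= (D - phi D) / 2) by apply Rmin_r.
destruct (Hz eta Heta) as [N1 HN1].
destruct (Un_cv0_eventually_lt _ eta (orbit_steps_cv0 x Han) Heta) as [N2 HN2].
set (n := max N1 N2).
pose proof (HN1 n ltac:(lia)) as Hxn_z.
pose proof (HN1 (S n) ltac:(lia)) as Hxn1_z.
pose proof (HN2 n ltac:(lia)) as Hstep.
pose proof (d_tri z (Nat.iter (S n) T x) (T z)) as Htri.
rewrite (d_sym z (Nat.iter (S n) T x)) in Htri.
pose proof (contraction (Nat.iter n T x) z) as Hc. simpl in Htri, Hstep, Hxn1_z.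
fold D in Htri.
destruct (G_cases (Nat.iter n T x) z) as [HG | HG]; rewrite HG in Hc.
- pose proof (normal_le phi _ phi_normal (d_ge0 (Nat.iter n T x) z)). lra.
- unfold M2, M1, H in Hc. fold D in Hc.
  pose proof (d_ge0 (Nat.iter n T x) z). pose proof (d_ge0 (Nat.iter n T x) (T (Nat.iter n T x))).
  rewrite (Rmax_right _ D), Rmax_right in Hc by lra. lra.
Qed.

Lemma Fix_dist_eq0 y1 y2 : Fix T d y1 -> Fix T d y2 -> d y1 y2 = 0.
Proof.
unfold Fix. intros Hy1 Hy2.
assert (HG : G y1 y2 = d y1 y2).
{ destruct (G_cases y1 y2) as [-> | ->]; [reflexivity|].
  unfold M2, M1, H. rewrite Hy1, Hy2, (Rmax_left 0 0), Rmax_left; [reflexivity | apply d_ge0 | lra]. }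
pose proof (contraction y1 y2) as Hc. rewrite HG in Hc.
pose proof (d_tri y1 (T y1) y2). pose proof (d_tri (T y1) (T y2) y2).
rewrite (d_sym (T y2) y2) in *.
apply (normal_le_phi_eq0 phi); [exact phi_normal | apply d_ge0 | lra].
Qed.

End Contraction.

Theorem theorem4 (X : Type) (x0 : X) (d : X -> X -> R)
  (Hsym : symmetric_fn d) (Htri : triangular d) (Hcomp : zero_complete d)
  (T : X -> X) (useM2 : bool) (phi : R -> R)
  (Hphi0 : maps_nonneg phi)
  (Hnra : nearly_right_admissible phi) (Han : asymptotic_normal phi)
  (Hcontr : forall x y : X,
      d (T x) (T y) <= phi (if useM2 then M2 T d x y else M1 d x y)) :
  global_Picard T d.
Proof.
destruct Hsym as [Hpos Hsy].
pose proof (proj1 Han) as Hnormal.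
assert (Hconv : forall x, zd_convergent d (fun n => Nat.iter n T x)).
{ intros x. apply Hcomp, (orbit_Cauchy X d T useM2 phi); assumption. }
assert (Hfix : forall x z, zd_converges d (fun n => Nat.iter n T x) z -> Fix T d z).
{ intros x z. apply (orbit_limit_Fix X d T useM2 phi); assumption. }
split; [intros x; split; [apply Hconv | apply Hfix]|]. split.
- destruct (Hconv x0) as [z Hz]. exists z. exact (Hfix x0 z Hz).
- intros y1 y2. apply (Fix_dist_eq0 X d T useM2 phi); assumption.
Qed.
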